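(* Let $\mathbb{T}^2=\mathbb{R}^2/\mathbb{Z}^2$ with coordinates $(x,y)$, let $a>0$, and equip $\mathrm{Diff}(\mathbb{T}^2)$ with the right-invariant metric given at the identity by $\langle\!\langle u,v\rangle\!\rangle=a\int_{\mathbb{T}^2}\langle u,v\rangle\,dx\,dy$. Write $S(u,v)=\langle\!\langle R(u,v)v,u\rangle\!\rangle$. Then for any $u=f(x)\frac{\partial}{\partial x}$ and $v=g(x)\frac{\partial}{\partial x}$ with $f,g$ smooth and $1$-periodic, $$S(u,v)=a\int_{\mathbb{T}^2}(f g_x-g f_x)^2\,dx\,dy\ \ge 0 .$$ On the other hand, if $u=\sin(2\pi x)\frac{\partial}{\partial x}$ and $v=\sin^2(2\pi x)\frac{\partial}{\partial y}$, then $S(u,v)<0$.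
   Context: $R$ is the curvature tensor of the Levi-Civita connection of the right-invariant metric at the identity. *)

From Stdlib Require Import Reals.
From Coquelicot Require Import Coquelicot.
Open Scope R_scope.

CoInductive smooth1 (f : R -> R) : Prop :=
  smooth1_intro :
    (forall x, ex_derive f x) -> smooth1 (Derive f) -> smooth1 f.

Definition dx (f : R -> R -> R) : R -> R -> R :=
  fun x y => Derive (fun t => f t y) x.
Definition dy (f : R -> R -> R) : R -> R -> R :=
  fun x y => Derive (fun t => f x t) y.

CoInductive smooth2 (f : R -> R -> R) : Prop :=
  smooth2_intro :
    (forall x y, continuous (fun p : R * R => f (fst p) (snd p)) (x, y)) ->
    (forall x y, ex_derive (fun t => f t y) x) ->
    (forall x y, ex_derive (fun t => f x t) y) ->
    smooth2 (dx f) -> smooth2 (dy f) -> smooth2 f.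

(* Functions on T^2 = R^2/Z^2: Z^2-periodic functions on R^2. *)
Definition periodic2 (f : R -> R -> R) : Prop :=
  forall x y, f (x + 1) y = f x y /\ f x (y + 1) = f x y.

(* Vector fields on T^2: pairs (first component = d/dx coefficient,
   second component = d/dy coefficient). *)
Definition VF := ((R -> R -> R) * (R -> R -> R))%type.

Definition smooth_vf (u : VF) : Prop :=
  smooth2 (fst u) /\ smooth2 (snd u) /\ periodic2 (fst u) /\ periodic2 (snd u).

Definition vf_add (u v : VF) : VF :=
  (fun x y => fst u x y + fst v x y, fun x y => snd u x y + snd v x y).
Definition vf_opp (u : VF) : VF :=
  (fun x y => - fst u x y, fun x y => - snd u x y).
Definition vf_sub (u v : VF) : VF := vf_add u (vf_opp v).

Definition vf_apply (u : VF) (h : R -> R -> R) : R -> R -> R :=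
  fun x y => fst u x y * dx h x y + snd u x y * dy h x y.

Definition vf_bracket (u v : VF) : VF :=
  (fun x y => vf_apply u (fst v) x y - vf_apply v (fst u) x y,
   fun x y => vf_apply u (snd v) x y - vf_apply v (snd u) x y).

(* Lie algebra bracket of Diff(T^2) for right-invariant fields:
   ad_u v = - [u,v] (the resulting curvature does not depend on this sign). *)
Definition lie (u v : VF) : VF := vf_opp (vf_bracket u v).

Definition int_T2 (h : R -> R -> R) : R :=
  RInt (fun x => RInt (fun y => h x y) 0 1) 0 1.

Definition ip (a : R) (u v : VF) : R :=
  a * int_T2 (fun x y => fst u x y * fst v x y + snd u x y * snd v x y).

(* N is the Levi-Civita connection of the right-invariant metric, restricted
   to right-invariant vector fields and evaluated at the identity
   (N u v = (nabla_U V)(id) for the right-invariant extensions U, V):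
   it maps smooth fields to smooth fields and satisfies the Koszul formula
   2 <<N u v, w>> = <<[u,v],w>> - <<[v,w],u>> + <<[w,u],v>>
   for all smooth w (this determines N uniquely). *)
Definition LC_connection (a : R) (N : VF -> VF -> VF) : Prop :=
  forall u v, smooth_vf u -> smooth_vf v ->
    smooth_vf (N u v) /\
    forall w, smooth_vf w ->
      2 * ip a (N u v) w =
        ip a (lie u v) w - ip a (lie v w) u + ip a (lie w u) v.

Definition curv (N : VF -> VF -> VF) (u v w : VF) : VF :=
  vf_sub (vf_sub (N u (N v w)) (N v (N u w))) (N (lie u v) w).

Definition S (a : R) (N : VF -> VF -> VF) (u v : VF) : R :=
  ip a (curv N u v v) u.

Definition along_x (f : R -> R) : VF := (fun x _ => f x, fun _ _ => 0).
Definition along_y (g : R -> R) : VF := (fun _ _ => 0, fun x _ => g x).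

(* For a right-invariant L^2 metric the Levi-Civita connection at the
   identity is given by Arnold's formula
     nabla_u v = 1/2 (ad_u v - ad*_u v - ad*_v u),
   where ad*_u is the L^2-transpose of ad_u; on the torus it is computed by
   integrating by parts, the boundary terms vanishing by periodicity.  The
   Koszul formula determines <<nabla_u v, w>> for every w, so taking for w the
   difference of two solutions shows that any Levi-Civita connection equals
   nabla.  For fields f(x) d/dx and g(x) d/dy all brackets and covariant
   derivatives are again such fields with explicit coefficients, so S(u,v)
   becomes a one-variable integral over a period.  For u, v both along x,
   subtracting the derivative of the periodic function
   f^2 g g' - g^2 f f' leaves (f g' - g f')^2.  For u = sin(kx) d/dx and
   v = sin^2(kx) d/dy (k = 2 pi), subtracting the derivative of
   7/4 k sin^5(kx) cos(kx) leaves -15/4 k^2 sin^4(kx) cos^2(kx), whose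
   integral is negative. *)

From Stdlib Require Import Reals Lra FunctionalExtensionality.
From Coquelicot Require Import Coquelicot.
Open Scope R_scope.

Lemma continuous_continuity_2d_pt (f : R -> R -> R) x y :
  continuous (fun p : R * R => f (fst p) (snd p)) (x, y) -> continuity_2d_pt f x y.
Proof.
  intros H eps.
  apply filterlim_locally with (eps := eps) in H.
  destruct H as [d Hd].
  exists d. intros u v Hu Hv.
  apply (Hd (u, v)). split; assumption.
Qed.

Lemma continuous_section_y (f : R -> R -> R) x y :
  continuous (fun p : R * R => f (fst p) (snd p)) (x, y) -> continuous (fun t => f x t) y.
Proof.
  intros H.
  apply (continuous_comp_2 (fun _ : R => x) (fun t => t) f y); auto.
  - apply continuous_const.
  - apply continuous_id.
Qed.

Inductive smooth_expr : (R -> R -> R) -> Prop :=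
| smooth_expr_smooth2 f : smooth2 f -> smooth_expr f
| smooth_expr_const c : smooth_expr (fun _ _ => c)
| smooth_expr_plus f g : smooth_expr f -> smooth_expr g -> smooth_expr (fun x y => f x y + g x y)
| smooth_expr_minus f g : smooth_expr f -> smooth_expr g -> smooth_expr (fun x y => f x y - g x y)
| smooth_expr_mult f g : smooth_expr f -> smooth_expr g -> smooth_expr (fun x y => f x y * g x y)
| smooth_expr_opp f : smooth_expr f -> smooth_expr (fun x y => - f x y).

Lemma smooth_expr_continuous f : smooth_expr f ->
  forall x y, continuous (fun p : R * R => f (fst p) (snd p)) (x, y).
Proof.
  induction 1; intros x y.
  - destruct H; auto.
  - apply continuous_const.
  - apply (continuous_plus (fun p : R * R => f (fst p) (snd p)) (fun p => g (fst p) (snd p))); auto.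
  - apply (continuous_minus (fun p : R * R => f (fst p) (snd p)) (fun p => g (fst p) (snd p)));
      auto.
  - apply (continuous_mult (fun p : R * R => f (fst p) (snd p)) (fun p => g (fst p) (snd p))); auto.
  - apply (continuous_opp (fun p : R * R => f (fst p) (snd p))); auto.
Qed.

Lemma smooth_expr_ex_derive_x f : smooth_expr f -> forall x y, ex_derive (fun t => f t y) x.
Proof.
  induction 1; intros x y.
  - destruct H; auto.
  - apply ex_derive_const.
  - apply (ex_derive_plus (fun t => f t y) (fun t => g t y)); auto.
  - apply (ex_derive_minus (fun t => f t y) (fun t => g t y)); auto.
  - apply (ex_derive_mult (fun t => f t y) (fun t => g t y)); auto.
  - apply (ex_derive_opp (fun t => f t y)); auto.
Qed.

Lemma smooth_expr_ex_derive_y f : smooth_expr f -> forall x y, ex_derive (fun t => f x t) y.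
Proof.
  induction 1; intros x y.
  - destruct H; auto.
  - apply ex_derive_const.
  - apply (ex_derive_plus (fun t => f x t) (fun t => g x t)); auto.
  - apply (ex_derive_minus (fun t => f x t) (fun t => g x t)); auto.
  - apply (ex_derive_mult (fun t => f x t) (fun t => g x t)); auto.
  - apply (ex_derive_opp (fun t => f x t)); auto.
Qed.

Lemma smooth_expr_dx f : smooth_expr f -> smooth_expr (dx f).
Proof.
  induction 1.
  - destruct H. now apply smooth_expr_smooth2.
  - replace (dx (fun _ _ => c)) with (fun _ _ : R => 0); [apply smooth_expr_const|].
    unfold dx. extensionality x; extensionality y. now rewrite Derive_const.
  - replace (dx (fun x y => f x y + g x y)) with (fun x y => dx f x y + dx g x y);
      [now apply smooth_expr_plus|].
    unfold dx. extensionality x; extensionality y.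
    rewrite Derive_plus; auto using smooth_expr_ex_derive_x.
  - replace (dx (fun x y => f x y - g x y)) with (fun x y => dx f x y - dx g x y);
      [now apply smooth_expr_minus|].
    unfold dx. extensionality x; extensionality y.
    rewrite Derive_minus; auto using smooth_expr_ex_derive_x.
  - replace (dx (fun x y => f x y * g x y))
      with (fun x y => dx f x y * g x y + f x y * dx g x y);
      [apply smooth_expr_plus; now apply smooth_expr_mult|].
    unfold dx. extensionality x; extensionality y.
    rewrite Derive_mult; auto using smooth_expr_ex_derive_x.
  - replace (dx (fun x y => - f x y)) with (fun x y => - dx f x y);
      [now apply smooth_expr_opp|].
    unfold dx. extensionality x; extensionality y. now rewrite Derive_opp.
Qed.

Lemma smooth_expr_dy f : smooth_expr f -> smooth_expr (dy f).
Proof.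
  induction 1.
  - destruct H. now apply smooth_expr_smooth2.
  - replace (dy (fun _ _ => c)) with (fun _ _ : R => 0); [apply smooth_expr_const|].
    unfold dy. extensionality x; extensionality y. now rewrite Derive_const.
  - replace (dy (fun x y => f x y + g x y)) with (fun x y => dy f x y + dy g x y);
      [now apply smooth_expr_plus|].
    unfold dy. extensionality x; extensionality y.
    rewrite Derive_plus; auto using smooth_expr_ex_derive_y.
  - replace (dy (fun x y => f x y - g x y)) with (fun x y => dy f x y - dy g x y);
      [now apply smooth_expr_minus|].
    unfold dy. extensionality x; extensionality y.
    rewrite Derive_minus; auto using smooth_expr_ex_derive_y.
  - replace (dy (fun x y => f x y * g x y))
      with (fun x y => dy f x y * g x y + f x y * dy g x y);
      [apply smooth_expr_plus; now apply smooth_expr_mult|].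
    unfold dy. extensionality x; extensionality y.
    rewrite Derive_mult; auto using smooth_expr_ex_derive_y.
  - replace (dy (fun x y => - f x y)) with (fun x y => - dy f x y);
      [now apply smooth_expr_opp|].
    unfold dy. extensionality x; extensionality y. now rewrite Derive_opp.
Qed.

Lemma smooth_expr_smooth : forall f, smooth_expr f -> smooth2 f.
Proof.
  cofix IH. intros f H. constructor.
  - now apply smooth_expr_continuous.
  - now apply smooth_expr_ex_derive_x.
  - now apply smooth_expr_ex_derive_y.
  - apply IH. now apply smooth_expr_dx.
  - apply IH. now apply smooth_expr_dy.
Qed.

Ltac smooth_expr_auto :=
  repeat (first [ assumption | apply smooth_expr_smooth2; assumption
                | apply smooth_expr_plus | apply smooth_expr_minus | apply smooth_expr_mult
                | apply smooth_expr_opp | apply smooth_expr_const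
                | apply smooth_expr_dx | apply smooth_expr_dy ]).

Ltac ex_derive_partial_auto :=
  repeat match goal with
  | |- _ /\ _ => split
  | |- True => exact I
  | |- ex_derive (fun t => _ t ?y) ?x => apply smooth_expr_ex_derive_x; smooth_expr_auto
  | |- ex_derive (fun t => _ ?x t) ?y => apply smooth_expr_ex_derive_y; smooth_expr_auto
  end.

Lemma is_derive_RInt_inner h x : smooth_expr h ->
  is_derive (fun x => RInt (fun y => h x y) 0 1) x (RInt (fun y => dx h x y) 0 1).
Proof.
  intros Hh.
  apply (is_derive_RInt_param h 0 1 x).
  - apply filter_forall. intros x0 t _. now apply smooth_expr_ex_derive_x.
  - intros t _. apply (continuous_continuity_2d_pt (dx h)).
    apply smooth_expr_continuous, smooth_expr_dx, Hh.
  - apply filter_forall. intros x0.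
    apply (ex_RInt_continuous (V := R_CompleteNormedModule)). intros z _.
    apply (continuous_section_y h). now apply smooth_expr_continuous.
Qed.

Lemma ex_RInt_inner h x : smooth_expr h -> ex_RInt (fun y => h x y) 0 1.
Proof.
  intros Hh. apply (ex_RInt_continuous (V := R_CompleteNormedModule)). intros z _.
  apply (continuous_section_y h). now apply smooth_expr_continuous.
Qed.

Lemma continuous_RInt_inner h x : smooth_expr h ->
  continuous (fun x => RInt (fun y => h x y) 0 1) x.
Proof.
  intros Hh.
  apply (ex_derive_continuous (K := R_AbsRing) (V := R_NormedModule)).
  eexists. now apply is_derive_RInt_inner.
Qed.

Lemma ex_RInt_outer h : smooth_expr h -> ex_RInt (fun x => RInt (fun y => h x y) 0 1) 0 1.
Proof.
  intros Hh. apply (ex_RInt_continuous (V := R_CompleteNormedModule)). intros z _.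
  now apply continuous_RInt_inner.
Qed.

Lemma int_T2_ext h1 h2 : (forall x y, h1 x y = h2 x y) -> int_T2 h1 = int_T2 h2.
Proof. intros H. f_equal. extensionality x; extensionality y. apply H. Qed.

Lemma int_T2_plus h1 h2 : smooth_expr h1 -> smooth_expr h2 ->
  int_T2 (fun x y => h1 x y + h2 x y) = int_T2 h1 + int_T2 h2.
Proof.
  intros H1 H2. unfold int_T2.
  rewrite (RInt_ext _ (fun x => RInt (fun y => h1 x y) 0 1 + RInt (fun y => h2 x y) 0 1)).
  - apply (RInt_plus (V := R_CompleteNormedModule)); now apply ex_RInt_outer.
  - intros x _. apply (RInt_plus (V := R_CompleteNormedModule)); now apply ex_RInt_inner.
Qed.

Lemma int_T2_scal c h : smooth_expr h -> int_T2 (fun x y => c * h x y) = c * int_T2 h.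
Proof.
  intros Hh. unfold int_T2.
  rewrite (RInt_ext _ (fun x => c * RInt (fun y => h x y) 0 1)).
  - apply (RInt_scal (V := R_CompleteNormedModule)). now apply ex_RInt_outer.
  - intros x _. apply (RInt_scal (V := R_CompleteNormedModule)). now apply ex_RInt_inner.
Qed.

Lemma int_T2_minus h1 h2 : smooth_expr h1 -> smooth_expr h2 ->
  int_T2 (fun x y => h1 x y - h2 x y) = int_T2 h1 - int_T2 h2.
Proof.
  intros H1 H2.
  rewrite (int_T2_ext _ (fun x y => h1 x y + (-1) * h2 x y)) by (intros; ring).
  rewrite int_T2_plus, int_T2_scal; [ring | smooth_expr_auto ..].
Qed.

Lemma int_T2_const_y h : int_T2 (fun x _ => h x) = RInt h 0 1.
Proof.
  apply RInt_ext. intros x _. rewrite RInt_const. unfold scal; simpl; unfold mult; simpl. ring.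
Qed.

Lemma int_T2_dx_eq0 h : smooth_expr h -> periodic2 h -> int_T2 (dx h) = 0.
Proof.
  intros Hh Hp. unfold int_T2.
  erewrite is_RInt_unique.
  2: { apply (is_RInt_derive (fun x => RInt (fun y => h x y) 0 1)); intros x _.
       - now apply is_derive_RInt_inner.
       - apply continuous_RInt_inner. now apply smooth_expr_dx. }
  rewrite (RInt_ext (fun y => h 1 y) (fun y => h 0 y)).
  - exact (minus_eq_zero _).
  - intros y _. rewrite <- (Rplus_0_l 1). apply Hp.
Qed.

Lemma int_T2_dy_eq0 h : smooth_expr h -> periodic2 h -> int_T2 (dy h) = 0.
Proof.
  intros Hh Hp. unfold int_T2.
  rewrite (RInt_ext _ (fun _ => 0)).
  - rewrite RInt_const. exact (scal_zero_r _).
  - intros x _.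
    erewrite is_RInt_unique.
    2: { apply (is_RInt_derive (fun y => h x y)); intros y _.
         - apply Derive_correct. now apply smooth_expr_ex_derive_y.
         - apply (continuous_section_y (dy h)).
           apply smooth_expr_continuous, smooth_expr_dy, Hh. }
    rewrite <- (Rplus_0_l 1), (proj2 (Hp x 0)). exact (minus_eq_zero _).
Qed.

Lemma Derive_shift (g : R -> R) x c : Derive g (x + c) = Derive (fun t => g (t + c)) x.
Proof.
  unfold Derive. f_equal. apply Lim_ext. intros h.
  now replace (x + h + c) with (x + c + h) by ring.
Qed.

Lemma Derive_periodic f : (forall x, f (x + 1) = f x) -> forall x, Derive f (x + 1) = Derive f x.
Proof. intros H x. rewrite Derive_shift. f_equal. extensionality t. apply H. Qed.

Lemma periodic2_dx f : periodic2 f -> periodic2 (dx f).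
Proof.
  intros H x y. unfold dx. split.
  - rewrite Derive_shift. f_equal. extensionality t. apply H.
  - f_equal. extensionality t. apply H.
Qed.

Lemma periodic2_dy f : periodic2 f -> periodic2 (dy f).
Proof.
  intros H x y. unfold dy. split.
  - f_equal. extensionality t. apply H.
  - rewrite Derive_shift. f_equal. extensionality t. apply H.
Qed.

Inductive periodic_expr : (R -> R -> R) -> Prop :=
| periodic_expr_periodic2 f : periodic2 f -> periodic_expr f
| periodic_expr_const c : periodic_expr (fun _ _ => c)
| periodic_expr_plus f g : periodic_expr f -> periodic_expr g ->
    periodic_expr (fun x y => f x y + g x y)
| periodic_expr_minus f g : periodic_expr f -> periodic_expr g ->
    periodic_expr (fun x y => f x y - g x y)
| periodic_expr_mult f g : periodic_expr f -> periodic_expr g ->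
    periodic_expr (fun x y => f x y * g x y)
| periodic_expr_opp f : periodic_expr f -> periodic_expr (fun x y => - f x y)
| periodic_expr_dx f : periodic_expr f -> periodic_expr (dx f)
| periodic_expr_dy f : periodic_expr f -> periodic_expr (dy f).

Lemma periodic_expr_periodic f : periodic_expr f -> periodic2 f.
Proof.
  induction 1; intros x y; cbv beta.
  - apply H.
  - auto.
  - destruct (IHperiodic_expr1 x y) as [-> ->], (IHperiodic_expr2 x y) as [-> ->]; auto.
  - destruct (IHperiodic_expr1 x y) as [-> ->], (IHperiodic_expr2 x y) as [-> ->]; auto.
  - destruct (IHperiodic_expr1 x y) as [-> ->], (IHperiodic_expr2 x y) as [-> ->]; auto.
  - destruct (IHperiodic_expr x y) as [-> ->]; auto.
  - now apply periodic2_dx.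
  - now apply periodic2_dy.
Qed.

Ltac periodic_expr_auto :=
  repeat (first [ apply periodic_expr_periodic2; assumption
                | apply periodic_expr_plus | apply periodic_expr_minus | apply periodic_expr_mult
                | apply periodic_expr_opp | apply periodic_expr_const
                | apply periodic_expr_dx | apply periodic_expr_dy ]).

(** * Arnold's formula for the Levi-Civita connection *)

Definition dot (u v : VF) : R -> R -> R :=
  fun x y => fst u x y * fst v x y + snd u x y * snd v x y.

(* (Du)^T v + (u . grad) v + (div u) v: integrating by parts, the
   L^2-transpose of w |-> lie u w. *)
Definition ad_star (u v : VF) : VF :=
 (fun x y => fst v x y * dx (fst u) x y + snd v x y * dx (snd u) x y
     + fst u x y * dx (fst v) x y + snd u x y * dy (fst v) x y
     + fst v x y * (dx (fst u) x y + dy (snd u) x y),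
  fun x y => fst v x y * dy (fst u) x y + snd v x y * dy (snd u) x y
     + fst u x y * dx (snd v) x y + snd u x y * dy (snd v) x y
     + snd v x y * (dx (fst u) x y + dy (snd u) x y)).

Definition nabla (u v : VF) : VF :=
 (fun x y => / 2 * (fst (lie u v) x y - fst (ad_star v u) x y - fst (ad_star u v) x y),
  fun x y => / 2 * (snd (lie u v) x y - snd (ad_star v u) x y - snd (ad_star u v) x y)).

Lemma ip_dot a u v : ip a u v = a * int_T2 (dot u v).
Proof. reflexivity. Qed.

Ltac unfold_fields :=
  unfold dot, nabla, ad_star, lie, vf_sub, vf_add, vf_opp, vf_bracket, vf_apply; simpl.

Ltac smooth_vf_auto :=
  repeat match goal with H : smooth_vf _ |- _ => destruct H as (? & ? & ? & ?) end;
  split; [|split; [|split]];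
  [ apply smooth_expr_smooth; unfold_fields; smooth_expr_auto
  | apply smooth_expr_smooth; unfold_fields; smooth_expr_auto
  | apply periodic_expr_periodic; unfold_fields; periodic_expr_auto
  | apply periodic_expr_periodic; unfold_fields; periodic_expr_auto ].

Lemma lie_smooth u v : smooth_vf u -> smooth_vf v -> smooth_vf (lie u v).
Proof. intros Hu Hv. smooth_vf_auto. Qed.

Lemma nabla_smooth u v : smooth_vf u -> smooth_vf v -> smooth_vf (nabla u v).
Proof. intros Hu Hv. smooth_vf_auto. Qed.

Lemma smooth_expr_dot u v : smooth_vf u -> smooth_vf v -> smooth_expr (dot u v).
Proof. intros (? & ? & _ & _) (? & ? & _ & _). unfold dot. smooth_expr_auto. Qed.

Lemma int_T2_lie_ad_star u v w : smooth_vf u -> smooth_vf v -> smooth_vf w ->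
  int_T2 (dot (lie u w) v) = int_T2 (dot (ad_star u v) w).
Proof.
  intros (u1 & u2 & u3 & u4) (v1 & v2 & v3 & v4) (w1 & w2 & w3 & w4).
  set (P := fun x y => fst u x y * dot v w x y).
  set (Q := fun x y => snd u x y * dot v w x y).
  assert (CP : smooth_expr P) by (unfold P, dot; smooth_expr_auto).
  assert (CQ : smooth_expr Q) by (unfold Q, dot; smooth_expr_auto).
  assert (HP : forall x y, dx P x y = dx (fst u) x y * dot v w x y
     + fst u x y * (dx (fst v) x y * fst w x y + fst v x y * dx (fst w) x y
                  + dx (snd v) x y * snd w x y + snd v x y * dx (snd w) x y)).
  { intros x y. unfold P, dot, dx. apply is_derive_unique. auto_derive; ex_derive_partial_auto.
    ring. }
  assert (HQ : forall x y, dy Q x y = dy (snd u) x y * dot v w x y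
     + snd u x y * (dy (fst v) x y * fst w x y + fst v x y * dy (fst w) x y
                  + dy (snd v) x y * snd w x y + snd v x y * dy (snd w) x y)).
  { intros x y. unfold Q, dot, dy. apply is_derive_unique. auto_derive; ex_derive_partial_auto.
    ring. }
  rewrite (int_T2_ext _ (fun x y => dot (ad_star u v) w x y - (dx P x y + dy Q x y))).
  - rewrite int_T2_minus, int_T2_plus, int_T2_dx_eq0, int_T2_dy_eq0;
      first [ ring | assumption | apply periodic_expr_periodic; unfold P, Q, dot; periodic_expr_auto
            | unfold_fields; smooth_expr_auto ].
  - intros x y. rewrite HP, HQ. unfold_fields. ring.
Qed.

Lemma nabla_koszul a u v w : smooth_vf u -> smooth_vf v -> smooth_vf w ->
  2 * ip a (nabla u v) w = ip a (lie u v) w - ip a (lie v w) u + ip a (lie w u) v.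
Proof.
  intros Hu Hv Hw.
  assert (Hnabla : int_T2 (dot (nabla u v) w) = / 2 * (int_T2 (dot (lie u v) w)
     - int_T2 (dot (ad_star v u) w) - int_T2 (dot (ad_star u v) w))).
  { rewrite (int_T2_ext _ (fun x y => / 2 * (dot (lie u v) w x y - dot (ad_star v u) w x y
                                             - dot (ad_star u v) w x y)))
      by (intros; unfold_fields; ring).
    rewrite int_T2_scal, !int_T2_minus;
      auto using smooth_expr_dot, lie_smooth;
      destruct Hu as (? & ? & _ & _), Hv as (? & ? & _ & _), Hw as (? & ? & _ & _);
      unfold_fields; smooth_expr_auto. }
  assert (Hanti : int_T2 (dot (lie w u) v) = - int_T2 (dot (lie u w) v)).
  { rewrite (int_T2_ext _ (fun x y => (-1) * dot (lie u w) v x y)) by (intros; unfold_fields; ring).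
    rewrite int_T2_scal by auto using smooth_expr_dot, lie_smooth. ring. }
  rewrite !ip_dot, Hnabla, Hanti, (int_T2_lie_ad_star v u w), (int_T2_lie_ad_star u v w); auto.
  field.
Qed.

Lemma LC_connection_nabla a : LC_connection a nabla.
Proof.
  intros u v Hu Hv. split.
  - now apply nabla_smooth.
  - intros w Hw. now apply nabla_koszul.
Qed.

(** * Uniqueness of the Levi-Civita connection *)

Lemma ex_RInt_in_unit_interval (g : R -> R) a b :
  (forall t, 0 <= t <= 1 -> continuous g t) -> 0 <= a -> a <= b -> b <= 1 -> ex_RInt g a b.
Proof.
  intros Hc H1 H2 H3. apply (ex_RInt_continuous (V := R_CompleteNormedModule)).
  intros z Hz. apply Hc. rewrite Rmin_left, Rmax_right in Hz by lra. lra.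
Qed.

Lemma RInt_nonneg_eq0 (g : R -> R) :
  (forall t, 0 <= t <= 1 -> continuous g t) ->
  (forall t, 0 <= t <= 1 -> 0 <= g t) ->
  RInt g 0 1 = 0 -> forall t, 0 <= t <= 1 -> g t = 0.
Proof.
  intros Hc Hp Hi t0 Ht0.
  destruct (Rle_lt_or_eq_dec 0 (g t0) (Hp t0 Ht0)) as [Hpos | Heq]; [exfalso | auto].
  assert (Hhalf : 0 < g t0 / 2) by lra.
  destruct (proj1 (filterlim_locally _ _) (Hc t0 Ht0) (mkposreal _ Hhalf)) as [d Hd].
  assert (Hnear : forall t, Rabs (t - t0) < d -> g t0 / 2 < g t).
  { intros t Ht. specialize (Hd t Ht).
    change (Rabs (g t - g t0) < g t0 / 2) in Hd. apply Rabs_lt_between' in Hd. lra. }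
  pose proof (cond_pos d) as Hd0.
  set (lo := Rmax 0 (t0 - d / 2)). set (hi := Rmin 1 (t0 + d / 2)).
  assert (Hlo : 0 <= lo <= t0 /\ t0 - d / 2 <= lo) by (unfold lo, Rmax; destruct Rle_dec; lra).
  assert (Hhi : t0 <= hi <= 1 /\ hi <= t0 + d / 2) by (unfold hi, Rmin; destruct Rle_dec; lra).
  assert (Hlohi : lo < hi) by (unfold lo, hi, Rmax, Rmin; destruct Rle_dec, Rle_dec; lra).
  assert (Hsplit : RInt g 0 1 = RInt g 0 lo + (RInt g lo hi + RInt g hi 1)).
  { rewrite <- (RInt_Chasles g 0 lo 1), <- (RInt_Chasles g lo hi 1); try reflexivity;
      apply ex_RInt_in_unit_interval; auto; lra. }
  assert (0 <= RInt g 0 lo)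
    by (apply RInt_ge_0; [lra | apply ex_RInt_in_unit_interval | intros; apply Hp]; auto; lra).
  assert (0 <= RInt g hi 1)
    by (apply RInt_ge_0; [lra | apply ex_RInt_in_unit_interval | intros; apply Hp]; auto; lra).
  assert (0 < RInt g lo hi).
  { apply RInt_gt_0; [lra | | intros; apply Hc; lra].
    intros t Ht. apply Rlt_trans with (g t0 / 2); [lra |]. apply Hnear, Rabs_def1; lra. }
  lra.
Qed.

Lemma periodic2_IZR (f : R -> R -> R) : periodic2 f ->
  forall k : Z, (forall x y, f (x + IZR k) y = f x y) /\ (forall x y, f x (y + IZR k) = f x y).
Proof.
  intros Hp k. induction k as [| k [IHx IHy] | k [IHx IHy]] using Z.peano_ind.
  - split; intros; now rewrite Rplus_0_r.
  - rewrite succ_IZR. split; intros.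
    + replace (x + (IZR k + 1)) with ((x + IZR k) + 1) by ring. now rewrite (proj1 (Hp _ _)).
    + replace (y + (IZR k + 1)) with ((y + IZR k) + 1) by ring. now rewrite (proj2 (Hp _ _)).
  - rewrite <- Z.sub_1_r, minus_IZR. split; intros.
    + rewrite <- (proj1 (Hp _ _)). replace (x + (IZR k - 1) + 1) with (x + IZR k) by ring. auto.
    + rewrite <- (proj2 (Hp _ _)). replace (y + (IZR k - 1) + 1) with (y + IZR k) by ring. auto.
Qed.

Lemma periodic2_eq0 (f : R -> R -> R) : periodic2 f ->
  (forall x y, 0 <= x <= 1 -> 0 <= y <= 1 -> f x y = 0) -> forall x y, f x y = 0.
Proof.
  intros Hp H x y.
  pose proof (base_Int_part x). pose proof (base_Int_part y).
  replace x with ((x - IZR (Int_part x)) + IZR (Int_part x)) by ring.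
  replace y with ((y - IZR (Int_part y)) + IZR (Int_part y)) by ring.
  rewrite (proj1 (periodic2_IZR f Hp _)), (proj2 (periodic2_IZR f Hp _)).
  apply H; lra.
Qed.

Lemma int_T2_nonneg_eq0 h : smooth_expr h -> periodic2 h -> (forall x y, 0 <= h x y) ->
  int_T2 h = 0 -> forall x y, h x y = 0.
Proof.
  intros Hh Hp Hpos Hi.
  assert (Hinner : forall x, 0 <= x <= 1 -> RInt (fun y => h x y) 0 1 = 0).
  { apply (RInt_nonneg_eq0 (fun x => RInt (fun y => h x y) 0 1)); [| | exact Hi].
    - intros; now apply continuous_RInt_inner.
    - intros. apply RInt_ge_0; [lra | now apply ex_RInt_inner | auto]. }
  apply periodic2_eq0; [exact Hp |]. intros x y Hx Hy.
  apply (RInt_nonneg_eq0 (fun y => h x y)); auto.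
  intros; apply (continuous_section_y h). now apply smooth_expr_continuous.
Qed.

Lemma LC_connection_unique a N u v : 0 < a -> LC_connection a N ->
  smooth_vf u -> smooth_vf v -> N u v = nabla u v.
Proof.
  intros ha HN Hu Hv.
  destruct (HN u v Hu Hv) as [HNs HNk].
  destruct (LC_connection_nabla a u v Hu Hv) as [Hs Hk].
  set (d := vf_sub (N u v) (nabla u v)).
  assert (Hd : smooth_vf d) by (unfold d; smooth_vf_auto).
  pose proof Hd as (d1 & d2 & _ & _).
  assert (Hdd : int_T2 (dot d d) = 0).
  { specialize (HNk d Hd). specialize (Hk d Hd). rewrite !ip_dot in HNk, Hk.
    rewrite (int_T2_ext _ (fun x y => dot (N u v) d x y - dot (nabla u v) d x y))
      by (intros; unfold d; unfold_fields; ring).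
    rewrite int_T2_minus by auto using smooth_expr_dot.
    apply (Rmult_eq_reg_l (2 * a)); lra. }
  assert (Hcomp : forall x y, dot d d x y = 0).
  { apply int_T2_nonneg_eq0; auto using smooth_expr_dot.
    - apply periodic_expr_periodic. destruct Hd as (_ & _ & ? & ?). unfold dot. periodic_expr_auto.
    - intros x y. unfold dot. nra. }
  rewrite (surjective_pairing (N u v)), (surjective_pairing (nabla u v)).
  f_equal; extensionality x; extensionality y; apply Rminus_diag_uniq;
    apply (Rplus_sqr_eq_0 _ _ (Hcomp x y)).
Qed.

(** * Fields f(x) d/dx and g(x) d/dy *)

Lemma S_LC_connection_unique a N u v : 0 < a -> LC_connection a N ->
  smooth_vf u -> smooth_vf v -> S a N u v = S a nabla u v.
Proof.
  intros ha HN Hu Hv. unfold S, curv.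
  assert (Hvv := nabla_smooth v v Hv Hv). assert (Huv := nabla_smooth u v Hu Hv).
  rewrite (LC_connection_unique a N v v), (LC_connection_unique a N u v),
    (LC_connection_unique a N u (nabla v v)), (LC_connection_unique a N v (nabla u v)),
    (LC_connection_unique a N (lie u v) v); auto using lie_smooth.
Qed.

Lemma smooth2_const c : smooth2 (fun _ _ => c).
Proof. apply smooth_expr_smooth, smooth_expr_const. Qed.

Lemma smooth2_of_smooth1 : forall F, smooth1 F -> smooth2 (fun x (_ : R) => F x).
Proof.
  cofix IH. intros F [HF HDF]. constructor.
  - intros x y. apply (continuous_comp fst F (x, y)).
    + apply continuous_fst.
    + apply (ex_derive_continuous (K := R_AbsRing) (V := R_NormedModule)), HF.
  - intros x y. apply HF.
  - intros x y. apply ex_derive_const.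
  - exact (IH _ HDF).
  - replace (dy (fun x (_ : R) => F x)) with (fun _ _ : R => 0); [apply smooth2_const |].
    unfold dy. extensionality x; extensionality y. now rewrite Derive_const.
Qed.

Lemma smooth1_ex_derive2 f : smooth1 f ->
  (forall x, ex_derive f x) /\ (forall x, ex_derive (Derive f) x)
  /\ (forall x, ex_derive (Derive (Derive f)) x).
Proof. intros [H0 [H1 [H2 _]]]. auto. Qed.

Lemma along_x_smooth f : smooth1 f -> (forall x, f (x + 1) = f x) -> smooth_vf (along_x f).
Proof.
  intros Hf Hp. split; [|split; [|split]]; simpl; auto using smooth2_of_smooth1, smooth2_const.
  all: split; auto.
Qed.

Lemma along_y_smooth f : smooth1 f -> (forall x, f (x + 1) = f x) -> smooth_vf (along_y f).
Proof.
  intros Hf Hp. split; [|split; [|split]]; simpl; auto using smooth2_of_smooth1, smooth2_const.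
  all: split; auto.
Qed.

Ltac eta_Derive :=
  repeat match goal with |- context [Derive (fun t => ?F t)] =>
    change (Derive (fun t => F t)) with (Derive F) end.

Ltac compute_field :=
  unfold_fields; unfold along_x, along_y; simpl;
  f_equal; extensionality x; extensionality y; unfold dx, dy;
  rewrite ?Derive_const; eta_Derive; field.

Lemma lie_along_x F G :
  lie (along_x F) (along_x G) = along_x (fun x => G x * Derive F x - F x * Derive G x).
Proof. compute_field. Qed.

Lemma lie_along_x_y F G : lie (along_x F) (along_y G) = along_y (fun x => - (F x * Derive G x)).
Proof. compute_field. Qed.

Lemma nabla_along_x F G :
  nabla (along_x F) (along_x G) = along_x (fun x => -2 * F x * Derive G x - G x * Derive F x).
Proof. compute_field. Qed.

Lemma nabla_along_x_y F G : nabla (along_x F) (along_y G) =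
  along_y (fun x => - (F x * Derive G x) - / 2 * (Derive F x * G x)).
Proof. compute_field. Qed.

Lemma nabla_along_y F G : nabla (along_y F) (along_y G) =
  along_x (fun x => - / 2 * (F x * Derive G x + G x * Derive F x)).
Proof. compute_field. Qed.

Lemma vf_sub_along_x F G : vf_sub (along_x F) (along_x G) = along_x (fun x => F x - G x).
Proof.
  unfold vf_sub, vf_add, vf_opp, along_x; simpl.
  f_equal; extensionality x; extensionality y; ring.
Qed.

Lemma ip_along_x a F G : ip a (along_x F) (along_x G) = a * RInt (fun x => F x * G x) 0 1.
Proof. unfold ip. rewrite <- int_T2_const_y. f_equal. apply int_T2_ext. intros; simpl; ring. Qed.

Lemma RInt_plus_derive_periodic T P DP :
  (forall x, continuous T x) -> (forall x, is_derive P x (DP x)) -> (forall x, continuous DP x) ->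
  P 1 = P 0 -> RInt (fun x => T x + DP x) 0 1 = RInt T 0 1.
Proof.
  intros HT HP HDP Hper.
  rewrite (RInt_plus (V := R_CompleteNormedModule) T DP);
    [| apply (ex_RInt_continuous (V := R_CompleteNormedModule)); auto ..].
  erewrite (is_RInt_unique DP) by (apply (is_RInt_derive P); auto).
  rewrite Hper, minus_eq_zero. exact (plus_zero_r _).
Qed.

(* Equations coming from Coquelicot's generic lemmas are stated in a carrier
   that is only convertible to R, which ring and field do not recognise. *)
Ltac as_real_eq := match goal with |- @eq _ ?l ?r => change (@eq R l r) end.

Ltac ex_derive_split :=
  repeat (match goal with |- _ /\ _ => split | |- True => exact I end || auto).

Ltac expand_Derive :=
  repeat (eta_Derive; match goal with
    | |- context [Derive ?F ?x] => lazymatch F with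
        | (fun t => ?G t) => fail
        | (fun _ => _) =>
            erewrite (is_derive_unique F x); [| auto_derive; ex_derive_split; try reflexivity]
        end
    end); eta_Derive.

Lemma continuous_of_ex_derive (f : R -> R) x : ex_derive f x -> continuous f x.
Proof. apply (ex_derive_continuous (K := R_AbsRing) (V := R_NormedModule)). Qed.

Lemma S_along_x a N f g : 0 < a -> LC_connection a N -> smooth1 f -> smooth1 g ->
  (forall x, f (x + 1) = f x) -> (forall x, g (x + 1) = g x) ->
  S a N (along_x f) (along_x g) =
     a * RInt (fun x => (f x * Derive g x - g x * Derive f x) ^ 2) 0 1.
Proof.
  intros ha HN Hf Hg Hfp Hgp.
  destruct (smooth1_ex_derive2 f Hf) as (f0 & f1 & f2).
  destruct (smooth1_ex_derive2 g Hg) as (g0 & g1 & g2).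
  rewrite S_LC_connection_unique by auto using along_x_smooth.
  unfold S, curv. rewrite lie_along_x, !nabla_along_x, !vf_sub_along_x, ip_along_x. f_equal.
  set (P := fun x => f x ^ 2 * g x * Derive g x - g x ^ 2 * f x * Derive f x).
  set (DP := fun x => f x ^ 2 * (Derive g x ^ 2 + g x * Derive (Derive g) x)
                      - g x ^ 2 * (Derive f x ^ 2 + f x * Derive (Derive f) x)).
  assert (HP : forall x, is_derive P x (DP x)).
  { intros x. unfold P, DP. auto_derive; ex_derive_split. eta_Derive. ring. }
  transitivity (RInt (fun x => (f x * Derive g x - g x * Derive f x) ^ 2 + DP x) 0 1);
    [| apply (RInt_plus_derive_periodic _ P DP)].
  - apply RInt_ext. intros x _. unfold DP. expand_Derive.
    as_real_eq. ring.
  - intros x. apply continuous_of_ex_derive. auto_derive; ex_derive_split.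
  - exact HP.
  - intros x. apply continuous_of_ex_derive. unfold DP. auto_derive; ex_derive_split.
  - unfold P. rewrite <- (Rplus_0_l 1), Hfp, Hgp, (Derive_periodic f Hfp), (Derive_periodic g Hgp).
    reflexivity.
Qed.

Lemma S_along_x_along_y a N f q : 0 < a -> LC_connection a N -> smooth1 f -> smooth1 q ->
  (forall x, f (x + 1) = f x) -> (forall x, q (x + 1) = q x) ->
  S a N (along_x f) (along_y q) =
     a * RInt (fun x => f x ^ 2 * Derive q x ^ 2 + f x ^ 2 * q x * Derive (Derive q) x
        - / 4 * f x * Derive (Derive f) x * q x ^ 2
        - / 2 * f x * Derive f x * q x * Derive q x) 0 1.
Proof.
  intros ha HN Hf Hq Hfp Hqp.
  destruct (smooth1_ex_derive2 f Hf) as (f0 & f1 & f2).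
  destruct (smooth1_ex_derive2 q Hq) as (q0 & q1 & q2).
  rewrite S_LC_connection_unique by auto using along_x_smooth, along_y_smooth.
  unfold S, curv.
  rewrite lie_along_x_y, nabla_along_y, nabla_along_x_y, nabla_along_x, !nabla_along_y,
    !vf_sub_along_x, ip_along_x.
  f_equal. apply RInt_ext. intros x _. expand_Derive.
  as_real_eq. field.
Qed.

(** * The counterexample u = sin(2 pi x) d/dx, v = sin^2(2 pi x) d/dy *)

Lemma smooth1_trig : forall k A B C, smooth1 (fun x => C + A * sin (k * x) + B * cos (k * x)).
Proof.
  cofix IH. intros k A B C. constructor.
  - intros x. auto_derive. exact I.
  - replace (Derive (fun x => C + A * sin (k * x) + B * cos (k * x)))
      with (fun x => 0 + (- (B * k)) * sin (k * x) + (A * k) * cos (k * x)).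
    + apply IH.
    + extensionality x. symmetry. apply is_derive_unique. auto_derive; [exact I | ring].
Qed.

Lemma smooth1_sin_2PI : smooth1 (fun x => sin (2 * PI * x)).
Proof.
  replace (fun x => sin (2 * PI * x))
    with (fun x => 0 + 1 * sin ((2 * PI) * x) + 0 * cos ((2 * PI) * x)).
  - apply smooth1_trig.
  - extensionality x. ring.
Qed.

Lemma smooth1_sin_2PI_sqr : smooth1 (fun x => sin (2 * PI * x) ^ 2).
Proof.
  replace (fun x => sin (2 * PI * x) ^ 2)
    with (fun x => / 2 + 0 * sin ((4 * PI) * x) + (- / 2) * cos ((4 * PI) * x)).
  - apply smooth1_trig.
  - extensionality x. replace (4 * PI * x) with (2 * (2 * PI * x)) by ring.
    rewrite cos_2a_sin. field.
Qed.

Lemma sin_2PI_periodic x : sin (2 * PI * (x + 1)) = sin (2 * PI * x).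
Proof.
  replace (2 * PI * (x + 1)) with (2 * PI * x + 2 * PI) by ring.
  rewrite sin_plus, sin_2PI, cos_2PI. ring.
Qed.

Lemma RInt_sin4_cos2_pos : 0 < RInt (fun x => sin (2 * PI * x) ^ 4 * cos (2 * PI * x) ^ 2) 0 1.
Proof.
  set (h := fun x => sin (2 * PI * x) ^ 4 * cos (2 * PI * x) ^ 2).
  assert (Hc : forall x, continuous h x).
  { intros x. apply continuous_of_ex_derive. unfold h. auto_derive. exact I. }
  assert (Hpos : forall x, 0 <= h x).
  { intros x. unfold h.
    replace (sin (2 * PI * x) ^ 4 * cos (2 * PI * x) ^ 2)
      with ((sin (2 * PI * x) ^ 2 * cos (2 * PI * x)) ^ 2) by ring.
    apply pow2_ge_0. }
  assert (Hh8 : 0 < h (1 / 8)).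
  { unfold h. replace (2 * PI * (1 / 8)) with (PI / 4) by field.
    rewrite sin_PI4, cos_PI4.
    assert (0 < 1 / sqrt 2) by (apply Rdiv_lt_0_compat; [lra | apply sqrt_lt_R0; lra]).
    apply Rmult_lt_0_compat; apply pow_lt; assumption. }
  destruct (Rle_lt_or_eq_dec 0 (RInt h 0 1)) as [Hlt | Heq]; [| exact Hlt |].
  - apply RInt_ge_0; [lra | apply (ex_RInt_continuous (V := R_CompleteNormedModule)) | ]; auto.
  - exfalso. assert (H0 := RInt_nonneg_eq0 h (fun t _ => Hc t) (fun t _ => Hpos t) (eq_sym Heq)).
    rewrite H0 in Hh8 by lra. lra.
Qed.

Lemma S_sin_sin2_neg a N : 0 < a -> LC_connection a N ->
  S a N (along_x (fun x => sin (2 * PI * x))) (along_y (fun x => (sin (2 * PI * x)) ^ 2)) < 0.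
Proof.
  intros ha HN.
  rewrite S_along_x_along_y; auto using smooth1_sin_2PI, smooth1_sin_2PI_sqr.
  2, 3: intros x; now rewrite sin_2PI_periodic.
  assert (Ds : Derive (fun x => sin (2 * PI * x)) = fun x => 2 * PI * cos (2 * PI * x)).
  { extensionality x. apply is_derive_unique. auto_derive; [exact I | ring]. }
  assert (Dq : Derive (fun x => sin (2 * PI * x) ^ 2)
               = fun x => 4 * PI * sin (2 * PI * x) * cos (2 * PI * x)).
  { extensionality x. apply is_derive_unique. auto_derive; [exact I | ring]. }
  rewrite Ds, Dq.
  set (k := 2 * PI).
  set (P := fun x => 7 / 4 * k * sin (k * x) ^ 5 * cos (k * x)).
  set (DP := fun x =>
    7 / 4 * k * (5 * k * sin (k * x) ^ 4 * cos (k * x) ^ 2 - k * sin (k * x) ^ 6)).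
  set (T := fun x => - (15 / 4) * k ^ 2 * (sin (k * x) ^ 4 * cos (k * x) ^ 2)).
  assert (HP : forall x, is_derive P x (DP x)).
  { intros x. unfold P, DP. auto_derive; [exact I | ring]. }
  assert (Hintegrand : RInt (fun x => T x + DP x) 0 1 = RInt T 0 1).
  { apply (RInt_plus_derive_periodic T P DP); auto.
    - intros x. apply continuous_of_ex_derive. unfold T. auto_derive. exact I.
    - intros x. apply continuous_of_ex_derive. unfold DP. auto_derive. exact I.
    - unfold P. replace (k * 1) with (2 * PI) by (unfold k; ring).
      rewrite Rmult_0_r, sin_2PI, sin_0. as_real_eq. ring. }
  rewrite (RInt_ext _ (fun x => T x + DP x)), Hintegrand.
  2: { intros x _. expand_Derive. unfold T, DP.
       as_real_eq. unfold k. field. }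
  unfold T. rewrite (RInt_scal (V := R_CompleteNormedModule)).
  - pose proof RInt_sin4_cos2_pos as Hint. fold k in Hint.
    assert (0 < k ^ 2) by (apply pow_lt; unfold k; pose proof PI_RGT_0; lra).
    assert (0 < a * k ^ 2) by now apply Rmult_lt_0_compat.
    change (a * (- (15 / 4) * k ^ 2 * RInt (fun x => sin (k * x) ^ 4 * cos (k * x) ^ 2) 0 1) < 0).
    nra.
  - apply (ex_RInt_continuous (V := R_CompleteNormedModule)). intros x _.
    apply continuous_of_ex_derive. auto_derive. exact I.
Qed.

Theorem proposition7p2 (a : R) (ha : 0 < a) :
  (exists N : VF -> VF -> VF, LC_connection a N) /\
  (forall N : VF -> VF -> VF, LC_connection a N ->
     (forall f g : R -> R,
        smooth1 f -> smooth1 g ->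
        (forall x, f (x + 1) = f x) -> (forall x, g (x + 1) = g x) ->
        S a N (along_x f) (along_x g) =
          a * int_T2 (fun x _ => (f x * Derive g x - g x * Derive f x) ^ 2)
        /\ 0 <= S a N (along_x f) (along_x g)) /\
     S a N (along_x (fun x => sin (2 * PI * x)))
           (along_y (fun x => (sin (2 * PI * x)) ^ 2)) < 0).
Proof.
  split; [exists nabla; apply LC_connection_nabla |].
  intros N HN. split; [| now apply S_sin_sin2_neg].
  intros f g Hf Hg Hfp Hgp.
  rewrite int_T2_const_y, (S_along_x a N f g) by assumption.
  split; [reflexivity |].
  destruct (smooth1_ex_derive2 f Hf) as (f0 & f1 & _).
  destruct (smooth1_ex_derive2 g Hg) as (g0 & g1 & _).
  apply Rmult_le_pos; [lra |].
  apply RInt_ge_0; [lra | | intros; apply pow2_ge_0].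
  apply (ex_RInt_continuous (V := R_CompleteNormedModule)). intros x _.
  apply continuous_of_ex_derive. auto_derive; ex_derive_split.
Qed.
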